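(* Let $A\in\mathbb{C}$ and expand $$\exp\Big(v\Big(\frac{\mathcal{S}(v\hbar\partial_y)}{\mathcal{S}(\hbar\partial_y)}-1\Big)\log(y-A)\Big)=\sum_{k\ge0}\hbar^{2k}c_{2k}(v,y).$$ Then $c_0(v,y)=1$, and for every $k\ge1$ $$c_{2k}(v,y)=\frac{(v+1)v(v-1)\cdots(v-2k+1)}{(y-A)^{2k}}\,p_{2k}(v)$$ for some polynomial $p_{2k}(v)\in\mathbb{C}[v]$.
   Context: $\mathcal{S}(u)=(e^{u/2}-e^{-u/2})/u$; the operator $\mathcal{S}(v\hbar\partial_y)/\mathcal{S}(\hbar\partial_y)$ is understood as its power series in $\hbar\partial_y$ (with coefficients polynomial in $v$), acting on $\log(y-A)$ termwise. *)

From mathcomp Require Import all_boot all_order all_algebra all_field.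
Set Implicit Arguments. Unset Strict Implicit. Unset Printing Implicit Defensive.
Import Order.TTheory GRing.Theory Num.Theory.
Local Open Scope ring_scope.

(* Formal power series (in a formal variable, here u or hbar) are represented
   by their coefficient sequences nat -> R. *)

Definition smul (R : pzRingType) (f g : nat -> R) : nat -> R :=
  fun n => \sum_(i < n.+1) f i * g (n - i)%N.

Definition sone (R : pzRingType) : nat -> R := fun n => if n == 0%N then 1 else 0.

Definition spow (R : pzRingType) (f : nat -> R) (m : nat) : nat -> R :=
  iter m (smul f) (@sone R).

(* Coefficient of u^n in S(u) = (e^{u/2} - e^{-u/2})/u :
   e^{u/2} - e^{-u/2} = sum_m ((1/2)^m - (-1/2)^m)/m! u^m, divided by u. *)
Definition Scoef (n : nat) : algC :=
  ((1/2) ^+ n.+1 - (- (1/2)) ^+ n.+1) / (n.+1)`!%:R.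

(* S(u) as a series in u with coefficients in C[v]. *)
Definition S_ser : nat -> {poly algC} := fun n => (Scoef n)%:P.

(* S(v u) as a series in u with coefficients in C[v]. *)
Definition Sv_ser : nat -> {poly algC} := fun n => Scoef n *: 'X^n.

(* Functions of y are modelled in {poly {poly algC}}: the outer variable is
   t = 1/(y - A), the inner one is v.  The derivation d/dy acts on a
   polynomial p(t) by the chain rule: d/dy p(t) = p'(t) * dt/dy = -t^2 p'(t). *)
Definition Dy (p : {poly {poly algC}}) : {poly {poly algC}} := - ('X ^+ 2 * p^`()).

(* (d/dy)^n log(y - A) for n >= 1, i.e. (d/dy)^(n-1) (1/(y-A)). *)
Definition dlog (n : nat) : {poly {poly algC}} := iter n.-1 Dy 'X.

Definition vvar : {poly {poly algC}} := ('X : {poly algC})%:P.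

(* Given Q = S(v u)/S(u) (coefficient sequence in u), the exponent
     v (Q(hbar d/dy) - 1) log(y - A) = sum_{n>=1} hbar^n v Q_n (d/dy)^n log(y-A)
   as a series in hbar (the n = 0 term is (Q_0 - 1) log(y-A) = 0, as Q_0 = 1). *)
Definition Expo (Q : nat -> {poly algC}) : nat -> {poly {poly algC}} :=
  fun n => if n == 0%N then 0 else vvar * (Q n)%:P * dlog n.

(* Coefficient of hbar^n in exp(Expo Q) = sum_m (Expo Q)^m / m!
   (the sum is finite in each degree since Expo Q has no constant term). *)
Definition cexp (Q : nat -> {poly algC}) (n : nat) : {poly {poly algC}} :=
  \sum_(m < n.+1) (((m`!)%:R)^-1 : algC)%:P%:P * spow (Expo Q) m n.

(* Write t = 1/(y - A) and u = hbar.  Since (d/dy)^n log(y - A) = (-1)^(n-1) (n-1)! t^n,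
   the exponent is sum_n e_n(v) (u t)^n, so c_n = f_n(v) t^n with f = exp e as a series
   in u.  S is even, hence so are Q = S(vu)/S(u), e and f.  Every e_n has the factor v, and
   Q(-1) = S(-u)/S(u) = 1, so f_n vanishes at v = 0 and v = -1 for n > 0.  For an integer
   m > 0, S(mu)/S(u) = (1/m) sum_(l < m) exp (a_l u) with a_l = (m-1)/2 - l, which makes
   e(m) the logarithm of prod_l (1 + a_l u); hence f(m) has degree m in u and f_n(m) = 0
   for n > m.  So f_2k vanishes at -1, 0, 1, ..., 2k-1.  Exponentials and logarithms of
   series are handled through logarithmic derivatives: g is determined by g_0 and
   u g' = c g. *)

From mathcomp Require Import all_boot all_order all_algebra all_field.
From mathcomp Require Import ring zify.
Set Implicit Arguments. Unset Strict Implicit. Unset Printing Implicit Defensive.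
Import GRing.Theory Num.Theory.
Local Open Scope ring_scope.

Section CauchyProduct.
Variable R : comNzRingType.
Implicit Types (f g h s w E : nat -> R) (c : R).

Lemma eq_smul f1 f2 g1 g2 n :
  (forall i, (i <= n)%N -> f1 i = f2 i) -> (forall i, (i <= n)%N -> g1 i = g2 i) ->
  smul f1 g1 n = smul f2 g2 n.
Proof.
move=> ef eg; apply: eq_bigr => i _.
by rewrite ef -1?ltnS // eg // leq_subr.
Qed.

Lemma smul_coefM f g n N : (n < N)%N ->
  smul f g n = (\poly_(i < N) f i * \poly_(i < N) g i)`_n.
Proof.
move=> lt_nN; rewrite coefM; apply: eq_bigr => i _; rewrite !coef_poly.
have le_iN : (i < N)%N by apply: leq_ltn_trans lt_nN; rewrite -ltnS.
by rewrite le_iN (leq_ltn_trans (leq_subr _ _) lt_nN).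
Qed.

Lemma smulC f g n : smul f g n = smul g f n.
Proof. by rewrite !(smul_coefM _ _ (ltnSn n)) mulrC. Qed.

Lemma coefM_eq (p p' q : {poly R}) n :
  (forall i, (i <= n)%N -> p`_i = p'`_i) -> (p * q)`_n = (p' * q)`_n.
Proof. by move=> epp'; rewrite !coefM; apply: eq_bigr => i _; rewrite epp' // -ltnS. Qed.

Lemma smulA f g h n : smul (smul f g) h n = smul f (smul g h) n.
Proof.
(* Truncate below degree n.+1 and use associativity of polynomial multiplication. *)
rewrite !(smul_coefM _ _ (ltnSn n)).
set P := fun u : nat -> R => \poly_(i < n.+1) u i.
have trunc_smul u v i : (i <= n)%N -> (P (smul u v))`_i = (P u * P v)`_i.
  by move=> le_in; rewrite coef_poly ltnS le_in; exact: smul_coefM.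
rewrite (coefM_eq _ (trunc_smul f g)) [in RHS]mulrC (coefM_eq _ (trunc_smul g h)).
by rewrite [in RHS]mulrC mulrA.
Qed.

Lemma smulDl f g h n : smul (f \+ g) h n = smul f h n + smul g h n.
Proof. by rewrite -big_split; apply: eq_bigr => i _; rewrite mulrDl. Qed.

Lemma smulZr c f g n : smul f (fun i => c * g i) n = c * smul f g n.
Proof. by rewrite /smul mulr_sumr; apply: eq_bigr => i _; rewrite mulrCA. Qed.

Lemma smul1r f n : smul f (@sone R) n = f n.
Proof.
rewrite /smul big_ord_recr /= subnn /sone eqxx mulr1 big1 ?add0r // => i _.
by rewrite subn_eq0 leqNgt ltn_ord mulr0.
Qed.

Lemma smul_sumr f (F : nat -> nat -> R) N n :
  smul f (fun k => \sum_(m < N) F m k) n = \sum_(m < N) smul f (F m) n.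
Proof. by rewrite /smul; under eq_bigr do rewrite mulr_sumr; rewrite exchange_big. Qed.

Lemma smulI s q1 q2 : s 0%N = 1 ->
  (forall n, smul s q1 n = smul s q2 n) -> forall n, q1 n = q2 n.
Proof.
move=> s0 eq_s; elim/ltn_ind => n IH.
move: (eq_s n); rewrite /smul !big_ord_recl s0 !mul1r subn0.
rewrite (eq_bigr (fun i : 'I_n => s (lift ord0 i) * q2 (n - lift ord0 i)%N)).
  by move/addIr.
move=> i _.
by rewrite IH //= /bump /=; case: n {IH eq_s} i => [[]//|n i]; rewrite subSS ltnS leq_subr.
Qed.

Definition sderiv f : nat -> R := fun n => n%:R * f n.

Lemma sderivM f g n : sderiv (smul f g) n = smul (sderiv f) g n + smul f (sderiv g) n.
Proof.
rewrite /sderiv /smul -big_split mulr_sumr; apply: eq_bigr => i _ /=.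
have le_in : (i <= n)%N by rewrite -ltnS.
by rewrite -{1}(subnKC le_in) natrD; ring.
Qed.

Lemma spow_small E m n : E 0%N = 0 -> (n < m)%N -> spow E m n = 0.
Proof.
move=> E0; elim: m n => [|m IH] n // lt_nm; apply: big1 => -[[|i] lt_in] _ /=.
  by rewrite E0 mul0r.
by rewrite -[X in _ * X]/(spow E m _) IH ?mulr0 //; lia.
Qed.

Lemma sderiv_spow E m n :
  sderiv (spow E m.+1) n = m.+1%:R * smul (sderiv E) (spow E m) n.
Proof.
elim: m n => [|m IH] n.
  rewrite sderivM mul1r [X in _ + X]big1 ?addr0 // => i _.
  by rewrite /sderiv /sone; case: (n - i)%N => [|k]; rewrite ?mulr0n ?mul0r !mulr0.
rewrite [spow _ _]/= -/(spow E m.+1) sderivM.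
rewrite (@eq_smul E E _ (fun k => m.+1%:R * smul (sderiv E) (spow E m) k)) //.
rewrite smulZr -(smulA E).
rewrite (@eq_smul (smul E (sderiv E)) (smul (sderiv E) E) (spow E m) (spow E m)) //.
  by rewrite smulA [m.+2%:R]mulrS mulrDl mul1r.
by move=> i _; exact: smulC.
Qed.

(* exp E when w m = 1/m!; the weights are a parameter so that they can be constant
   polynomials. *)
Definition sexp w E : nat -> R := fun n => \sum_(m < n.+1) w m * spow E m n.

Lemma sexp0 w E : sexp w E 0 = w 0%N.
Proof. by rewrite /sexp big_ord1 /= /sone eqxx mulr1. Qed.

Lemma sexp_widen w E n N : E 0%N = 0 -> (n < N)%N ->
  sexp w E n = \sum_(m < N) w m * spow E m n.
Proof.
move=> E0 lt_nN; rewrite /sexp (big_ord_widen _ (fun m => w m * spow E m n) lt_nN).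
rewrite big_mkcond; apply: eq_bigr => m _; case: ltnP => // le_nm.
by rewrite spow_small ?mulr0.
Qed.

Lemma sderiv_sexp w E : (forall m, m.+1%:R * w m.+1 = w m) -> E 0%N = 0 ->
  forall n, sderiv (sexp w E) n = smul (sderiv E) (sexp w E) n.
Proof.
move=> w_rec E0 n.
rewrite (@eq_smul _ (sderiv E) _ (fun k => \sum_(m < n.+1) w m * spow E m k)) //;
  last first.
  by move=> k le_kn; exact: sexp_widen.
rewrite (smul_sumr _ (fun m k => w m * spow E m k)); under eq_bigr do rewrite smulZr.
rewrite /sderiv (sexp_widen _ E0 (leqW (ltnSn n))) mulr_sumr big_ord_recl /=.
have -> : n%:R * (w 0%N * sone R n) = 0.
  by rewrite /sone; case: n => [|n]; rewrite ?mulr0n ?mul0r ?mulr0.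
rewrite add0r; apply: eq_bigr => m _; rewrite /bump add1n add0n.
rewrite mulrCA -[_%:R * smul _ _ _]/(sderiv (spow E m.+1) n) sderiv_spow.
by rewrite mulrA (mulrC (w _)) w_rec.
Qed.

Lemma sexp_null w E n : (forall i, E i = 0) -> (0 < n)%N -> sexp w E n = 0.
Proof.
move=> E_0 n_gt0; rewrite /sexp big_ord_recl /= /sone gtn_eqF // mulr0 add0r.
by apply: big1 => m _; rewrite /spow /= /smul big1 ?mulr0 // => i _; rewrite E_0 mul0r.
Qed.

Definition even_seq f := forall n, odd n -> f n = 0.

Lemma smul_even f g : even_seq f -> even_seq g -> even_seq (smul f g).
Proof.
move=> f_even g_even n n_odd; apply: big1 => i _.
have [i_odd|i_even] := boolP (odd i); first by rewrite f_even ?mul0r.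
by rewrite g_even ?mulr0 // oddB ?(ltnSE (ltn_ord i)) // n_odd (negbTE i_even).
Qed.

Lemma spow_even E m : even_seq E -> even_seq (spow E m).
Proof.
move=> E_even; elim: m => [|m IH] n n_odd /=; last exact: smul_even.
by rewrite /sone; case: n n_odd.
Qed.

Lemma sexp_even w E : even_seq E -> even_seq (sexp w E).
Proof. by move=> E_even n n_odd; apply: big1 => m _; rewrite spow_even ?mulr0. Qed.

Lemma even_smulKl s q : s 0%N = 1 -> even_seq s -> even_seq (smul s q) -> even_seq q.
Proof.
move=> s0 s_even sq_even; elim/ltn_ind => n IH n_odd.
move: (sq_even n n_odd); rewrite /smul big_ord_recl s0 mul1r subn0 big1 ?addr0 // => i _.
have [i_odd|i_even] := boolP (odd (lift ord0 i)); first by rewrite s_even ?mul0r.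
have n_gt0 : (0 < n)%N by case: n {IH sq_even} n_odd i {i_even}.
have le_in : (lift ord0 i <= n)%N := ltnSE (ltn_ord _).
rewrite IH ?mulr0 //; first by rewrite /= /bump /=; lia.
by rewrite oddB // n_odd (negbTE i_even).
Qed.

End CauchyProduct.

Lemma rmorph_smul (R S : comNzRingType) (phi : {rmorphism R -> S}) (f g : nat -> R) n :
  phi (smul f g n) = smul (phi \o f) (phi \o g) n.
Proof. by rewrite rmorph_sum; apply: eq_bigr => i _; rewrite rmorphM. Qed.

Lemma rmorph_spow (R S : comNzRingType) (phi : {rmorphism R -> S}) (E : nat -> R) m n :
  phi (spow E m n) = spow (phi \o E) m n.
Proof.
elim: m n => [|m IH] n.
  by rewrite /= /sone; case: (n == 0%N); rewrite ?rmorph1 ?rmorph0.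
rewrite -[spow E m.+1]/(smul E (spow E m)) rmorph_smul.
by apply: eq_smul => // i _; exact: IH.
Qed.

Section HomogeneousSeries.
Variable R : comNzRingType.

Lemma smul_homog (a b : nat -> R) (f g : nat -> {poly R}) n :
  (forall i, f i = (a i)%:P * 'X^i) -> (forall i, g i = (b i)%:P * 'X^i) ->
  smul f g n = (smul a b n)%:P * 'X^n.
Proof.
move=> fE gE; rewrite rmorph_sum mulr_suml; apply: eq_bigr => i _.
by rewrite fE gE /= polyCM mulrACA -exprD subnKC // -ltnS.
Qed.

Lemma spow_homog (a : nat -> R) (E : nat -> {poly R}) m n :
  (forall i, E i = (a i)%:P * 'X^i) -> spow E m n = (spow a m n)%:P * 'X^n.
Proof.
move=> EE; elim: m n => [|m IH] n /=; last exact: smul_homog.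
by rewrite /sone; case: n => [|n]; rewrite ?expr0 ?mulr1 ?mul0r.
Qed.

Lemma sexp_homog (w a : nat -> R) (E : nat -> {poly R}) n :
  (forall i, E i = (a i)%:P * 'X^i) ->
  sexp (fun m => (w m)%:P) E n = (sexp w a n)%:P * 'X^n.
Proof.
move=> EE; rewrite rmorph_sum mulr_suml; apply: eq_bigr => m _.
by rewrite (spow_homog _ _ EE) /= polyCM mulrA.
Qed.
End HomogeneousSeries.

Lemma sderiv_smul_uniq (R : numDomainType) (c g h : nat -> R) :
    c 0%N = 0 -> g 0%N = h 0%N ->
    (forall n, sderiv g n = smul c g n) -> (forall n, sderiv h n = smul c h n) ->
  forall n, g n = h n.
Proof.
move=> c0 gh0 g_ode h_ode; elim/ltn_ind => -[|n] IH //.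
have eq_cgh : smul c g n.+1 = smul c h n.+1.
  rewrite /smul !(big_ord_recl n.+1) c0 !mul0r !add0r.
  by apply: eq_bigr => i _; rewrite IH // ltn_subrL.
apply: (mulfI (x := n.+1%:R)); first by rewrite pnatr_eq0.
by rewrite -[LHS]/(sderiv g n.+1) -[RHS]/(sderiv h n.+1) g_ode h_ode.
Qed.

Definition invfact {F : numFieldType} (m : nat) : F := (m`!)%:R^-1.

Lemma natr_fact_neq0 (F : numDomainType) n : (n`!%:R : F) != 0.
Proof. by rewrite pnatr_eq0 -lt0n fact_gt0. Qed.

Lemma invfact0 (F : numFieldType) : invfact 0 = 1 :> F.
Proof. by rewrite /invfact invr1. Qed.

Lemma invfact_rec (F : numFieldType) m : m.+1%:R * invfact m.+1 = invfact m :> F.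
Proof.
by rewrite /invfact factS natrM invfM mulrA mulfV ?mul1r ?pnatr_eq0.
Qed.

Section LinearFactors.
Variable R : comNzRingType.
Implicit Types (f g c d : nat -> R) (a : R).

(* Coefficients of u (d/du) log (1 + a u). *)
Definition logder_lin a : nat -> R := fun i => if i is 0 then 0 else - (- a) ^+ i.

Lemma sderiv_lin a n :
  sderiv (fun i => (1 + a *: 'X)`_i) n = smul (logder_lin a) (fun i => (1 + a *: 'X)`_i) n.
Proof.
have coef_lin i : (1 + a *: 'X)`_i = (i == 0%N)%:R + a * (i == 1%N)%:R.
  by rewrite coefD coef1 coefZ coefX.
rewrite smulC /sderiv /smul; case: n => [|[|n]].
- by rewrite big_ord1 /= !coef_lin /=; ring.
- by rewrite !big_ord_recl big_ord0 /= !coef_lin /=; ring.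
rewrite !big_ord_recl /= big1 => [|i _]; last by rewrite coef_lin /bump /=; ring.
by rewrite !coef_lin /= /bump /= !subSS subn0 exprS; ring.
Qed.

Lemma sderiv_smul_log f g c d :
    (forall n, sderiv f n = smul c f n) -> (forall n, sderiv g n = smul d g n) ->
  forall n, sderiv (smul f g) n = smul (c \+ d) (smul f g) n.
Proof.
move=> f_ode g_ode n; rewrite sderivM smulDl.
rewrite (@eq_smul _ _ (smul c f) g g) // (@eq_smul _ f f _ (smul d g)) //.
rewrite smulA -(smulA f d g) (@eq_smul _ (smul f d) (smul d f) g g) //.
  by rewrite smulA.
by move=> i _; exact: smulC.
Qed.

Lemma sderiv_prod_lin (a : nat -> R) m n :
  sderiv (fun i => (\prod_(l < m) (1 + a l *: 'X))`_i) n =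
  smul (fun i => \sum_(l < m) logder_lin (a l) i)
       (fun i => (\prod_(l < m) (1 + a l *: 'X))`_i) n.
Proof.
elim: m n => [|m IH] n.
  rewrite big_ord0 /sderiv coef1 /smul big1 => [|i _]; last by rewrite big_ord0 mul0r.
  by case: n => [|n]; rewrite ?mulr0n ?mul0r ?mulr0.
rewrite big_ord_recr /=; set P := \prod_(l < m) _; set L := 1 + _ *: 'X.
have coefPL i : (P * L)`_i = smul (fun j => P`_j) (fun j => L`_j) i by rewrite coefM.
rewrite /sderiv coefPL -[_ * smul _ _ _]/(sderiv (smul _ _) n).
rewrite (sderiv_smul_log IH (sderiv_lin (a m))).
by apply: eq_smul => i _; rewrite ?big_ord_recr ?coefPL.
Qed.

End LinearFactors.

Lemma Scoef0 : Scoef 0 = 1.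
Proof. by rewrite /Scoef /= !expr1 opprK divr1; field. Qed.

Lemma Scoef_even : even_seq Scoef.
Proof.
move=> n n_odd; rewrite /Scoef exprNn -signr_odd /= n_odd expr0.
by rewrite !mul1r subrr mul0r.
Qed.

Definition expcoef {F : numFieldType} (a : F) (n : nat) : F := a ^+ n * invfact n.

Lemma smul_Scoef_expcoef a n :
  smul Scoef (expcoef a) n = expcoef (a + 1/2) n.+1 - expcoef (a - 1/2) n.+1.
Proof.
rewrite /smul /expcoef -mulrBl !exprDn -sumrB [in RHS]big_ord_recl /= !expr0 subrr add0r.
rewrite mulr_suml; apply: eq_bigr => i _; rewrite /bump leq0n add1n subSS.
have fact_split : ((n.+1)`!%:R : algC) = 'C(n.+1, i.+1)%:R * ((i.+1)`!%:R * (n - i)`!%:R).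
  by rewrite -!natrM -(bin_fact (ltn_ord i)) subSS.
rewrite /Scoef /invfact fact_split -mulrnBl -[_ *+ 'C(_, _)]mulr_natr.
have binom_neq0 : ('C(n.+1, i.+1)%:R : algC) != 0 by rewrite pnatr_eq0 -lt0n bin_gt0.
by field; rewrite binom_neq0 !natr_fact_neq0.
Qed.

(* S(m u) / S(u) = (1/m) sum_(l < m) exp (a_l u) with a_l = Sratio_exponent m l. *)
Definition Sratio_exponent (m l : nat) : algC := (m%:R - 1) / 2 - l%:R.

Lemma Sratio_expansion m n : (0 < m)%N ->
  smul Scoef (fun i => m%:R^-1 * \sum_(l < m) expcoef (Sratio_exponent m l) i) n =
  Scoef n * m%:R ^+ n.
Proof.
move=> m_gt0; rewrite smulZr (smul_sumr _ (fun l i => expcoef (Sratio_exponent m l) i)).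
under eq_bigr do rewrite smul_Scoef_expcoef.
pose e l : algC := expcoef (m%:R / 2 - l%:R) n.+1.
rewrite (eq_bigr (fun l : 'I_m => - (e l.+1 - e l))) => [|l _]; last first.
  by rewrite opprB /e /Sratio_exponent -natr1; congr (expcoef _ _ - expcoef _ _); field.
rewrite sumrN -(big_mkord xpredT (fun l => e l.+1 - e l)) telescope_sumr // opprB /e subr0.
have -> : m%:R / 2 - m%:R = m%:R * - (1 / 2) :> algC by field.
rewrite mulrC /expcoef /Scoef /invfact !exprMn exprS expr1n mul1r.
have m_neq0 : (m%:R : algC) != 0 by rewrite pnatr_eq0 -lt0n.
by field; rewrite m_neq0 natr_fact_neq0.
Qed.

Lemma dlogE n : dlog n.+1 = ((-1) ^+ n * (n`!)%:R : algC)%:P%:P * 'X^(n.+1).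
Proof.
elim: n => [|n IH]; first by rewrite /dlog /= mul1r !polyC1 mul1r expr1.
rewrite /dlog /= -/(dlog n.+1) IH /Dy derivM derivC mul0r add0r derivXn /=.
have -> : 'X^(n.+2) = 'X^n * 'X * 'X :> {poly {poly algC}} by rewrite !exprSr.
rewrite -[_ *+ n.+1]mulr_natr factS natrM.
by rewrite !polyCM !polyC_natr !rmorphXn !rmorphN1 [(-1) ^+ n.+1]exprS; ring.
Qed.

Section ExponentialCoefficients.
Variable Q : nat -> {poly algC}.
Hypothesis Q_def : forall n, smul S_ser Q n = Sv_ser n.

Lemma Q_horner x n : smul Scoef (fun i => (Q i).[x]) n = Scoef n * x ^+ n.
Proof.
transitivity (horner_eval x (smul S_ser Q n)).
  by rewrite rmorph_smul; apply: eq_smul => i _ //=; rewrite horner_evalE hornerC.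
by rewrite Q_def horner_evalE /Sv_ser hornerZ hornerXn.
Qed.

Lemma Q_even : even_seq Q.
Proof.
apply: (@even_smulKl _ S_ser); first by rewrite /S_ser Scoef0.
  by move=> n n_odd; rewrite /S_ser Scoef_even.
by move=> n n_odd; rewrite Q_def /Sv_ser Scoef_even ?scale0r.
Qed.

Lemma Q_horner_N1 i : (Q i).[-1] = sone algC i.
Proof.
apply: (@smulI _ _ (fun i => (Q i).[-1]) _ Scoef0) => n; rewrite Q_horner smul1r.
have [n_odd|n_even] := boolP (odd n); first by rewrite Scoef_even ?mul0r.
by rewrite -signr_odd (negbTE n_even) mulr1.
Qed.

Lemma Q_horner_nat m i : (0 < m)%N ->
  (Q i).[m%:R] = m%:R^-1 * \sum_(l < m) expcoef (Sratio_exponent m l) i.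
Proof.
move=> m_gt0; pose q i := m%:R^-1 * \sum_(l < m) expcoef (Sratio_exponent m l) i.
apply: (@smulI _ _ (fun i => (Q i).[m%:R]) q Scoef0) => n.
by rewrite Q_horner Sratio_expansion.
Qed.

Definition expo_coef (n : nat) : {poly algC} :=
  if n is n'.+1 then 'X * Q n * ((-1) ^+ n' * (n'`!)%:R)%:P else 0.

Lemma ExpoE n : Expo Q n = (expo_coef n)%:P * 'X^n.
Proof.
case: n => [|n]; first by rewrite /Expo /= polyC0 mul0r.
by rewrite /Expo /= dlogE /vvar !polyCM; ring.
Qed.

Definition cexp_coef : nat -> {poly algC} := sexp (fun m => (invfact m)%:P) expo_coef.

Lemma cexpE n : cexp Q n = (cexp_coef n)%:P * 'X^n.
Proof. exact: sexp_homog ExpoE. Qed.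

Lemma cexp_coef_even : even_seq cexp_coef.
Proof.
by apply: sexp_even => -[|n] // n_odd; rewrite /expo_coef Q_even // mulr0 mul0r.
Qed.

Lemma horner_cexp_coef x n :
  (cexp_coef n).[x] = sexp invfact (fun i => (expo_coef i).[x]) n.
Proof.
rewrite horner_sum; apply: eq_bigr => m _.
by rewrite hornerM hornerC -horner_evalE rmorph_spow.
Qed.

Lemma sderiv_expo_coef_horner_nat m i : (0 < m)%N ->
  sderiv (fun i => (expo_coef i).[m%:R]) i =
  \sum_(l < m) logder_lin (Sratio_exponent m l) i.
Proof.
move=> m_gt0; case: i => [|i]; first by rewrite /sderiv mul0r big1.
rewrite (eq_bigr (fun l : 'I_m => (-1) ^+ i * Sratio_exponent m l ^+ i.+1)) => [|l _];
  last first.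
  by rewrite /logder_lin (exprNn (Sratio_exponent m l)) [(-1) ^+ i.+1]exprS; ring.
rewrite -mulr_sumr /sderiv /expo_coef !hornerM hornerX hornerC Q_horner_nat //.
rewrite /expcoef /invfact -mulr_suml factS natrM invfM.
have m_neq0 : (m%:R : algC) != 0 by rewrite pnatr_eq0 -lt0n.
by field; rewrite natr_fact_neq0 m_neq0 nat1r pnatr_eq0.
Qed.

Lemma cexp_coef_root_nat m n : (0 < m)%N -> (m < n)%N -> (cexp_coef n).[m%:R] = 0.
Proof.
move=> m_gt0 lt_mn; pose a := Sratio_exponent m; pose P := \prod_(l < m) (1 + a l *: 'X).
have size_P : (size P <= m.+1)%N.
  apply: leq_trans (size_poly_prod_leq _ _) _; rewrite card_ord leq_subLR addnS ltnS addnn.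
  rewrite -muln2 -[X in (_ <= X * 2)%N]card_ord -sum_nat_const leq_sum // => l _.
  apply: leq_trans (size_polyD _ _) _; rewrite size_poly1 geq_max /=.
  by rewrite (leq_trans (size_scale_leq _ _)) // size_polyX.
(* f(m) and the coefficients of P both solve u g' = c g, with c the log-derivative of P. *)
rewrite horner_cexp_coef
  (@sderiv_smul_uniq _ (fun i => \sum_(l < m) logder_lin (a l) i) _ (fun i => P`_i)).
- by rewrite nth_default // (leq_trans size_P).
- by rewrite big1.
- rewrite sexp0 invfact0 coef0_prod big1 // => l _.
  by rewrite coefD coef1 coefZ coefX mulr0 addr0.
- move=> k; rewrite sderiv_sexp; [|exact: invfact_rec|by rewrite /= horner0].
  by apply: eq_smul => // i _; exact: sderiv_expo_coef_horner_nat.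
- exact: sderiv_prod_lin.
Qed.

Lemma cexp_coef_root0 n : (0 < n)%N -> (cexp_coef n).[0] = 0.
Proof.
move=> n_gt0; rewrite horner_cexp_coef sexp_null // => -[|i].
  by rewrite /= horner0.
by rewrite /= !hornerM hornerX !mul0r.
Qed.

Lemma cexp_coef_rootN1 n : (0 < n)%N -> (cexp_coef n).[-1] = 0.
Proof.
move=> n_gt0; rewrite horner_cexp_coef sexp_null // => -[|i].
  by rewrite /= horner0.
by rewrite /= !hornerM Q_horner_N1 /sone /= mulr0 mul0r.
Qed.

Lemma cexp_coef_root k i : (0 < k)%N -> (i <= k.*2)%N -> root (cexp_coef k.*2) (i%:R - 1).
Proof.
move=> k_gt0 le_i2k; have k2_gt0 : (0 < k.*2)%N by rewrite double_gt0.
apply/eqP; case: i le_i2k => [|[|i]] le_i2k.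
- by rewrite sub0r cexp_coef_rootN1.
- by rewrite subrr cexp_coef_root0.
- by rewrite -natr1 addrK cexp_coef_root_nat.
Qed.

Lemma cexp_coef_factor k : (0 < k)%N ->
  exists p, cexp_coef k.*2 = \prod_(i < k.*2.+1) ('X - (i%:R - 1)%:P) * p.
Proof.
move=> k_gt0; have [p ->] : exists p, cexp_coef k.*2 =
    p * \prod_(z <- [seq i%:R - 1 | i <- iota 0 k.*2.+1]) ('X - z%:P).
  apply: uniq_roots_prod_XsubC.
    apply/allP => z /mapP[i]; rewrite mem_iota add0n => /andP[_ le_i2k] ->.
    exact: cexp_coef_root.
  rewrite uniq_rootsE map_inj_uniq ?iota_uniq // => i j /addIr /eqP.
  by rewrite eqr_nat => /eqP.
exists p; rewrite mulrC big_map.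
by rewrite -[iota 0 k.*2.+1]/(index_iota 0 k.*2.+1) big_mkord.
Qed.

End ExponentialCoefficients.

Theorem lemma4p1 (Q : nat -> {poly algC})
  (hQ : forall n, smul S_ser Q n = Sv_ser n) :
  cexp Q 0 = 1 /\
  (forall k, cexp Q k.*2.+1 = 0) /\
  (forall k, (0 < k)%N ->
     exists p : {poly algC},
       cexp Q k.*2 =
         ((\prod_(i < k.*2.+1) ('X - (i%:R - 1)%:P)) * p)%:P * 'X ^+ k.*2).
Proof.
split; first by rewrite cexpE /cexp_coef sexp0 invfact0 expr0 mulr1.
split=> [k|k k_gt0]; rewrite cexpE.
  by rewrite (cexp_coef_even hQ) ?polyC0 ?mul0r //= odd_double.
by have [p ->] := cexp_coef_factor hQ k_gt0; exists p.
Qed.
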